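(* Let $\tau$ be a topology on $\mathbb{R}$ such that $\tau_e\subset\tau$ and every nonempty $\tau$-open set has the Baire property and is non-meager (with respect to the Euclidean topology). For any function $f\colon\mathbb{R}\to\mathbb{R}$, if $\mathrm{C}_\tau(f)$ is dense in $\mathbb{R}$, then $\mathrm{C}_\tau(f)$ is residual.
   Context: $\tau_e$ is the Euclidean topology. $\mathrm{C}_\tau(f)$ is the set of points at which $f\colon(\mathbb{R},\tau)\to(\mathbb{R},\tau_e)$ is continuous. A set is residual if its complement is meager (in the Euclidean topology). *)

From Stdlib Require Import Reals.
Open Scope R_scope.

Definition eopen (U : R -> Prop) : Prop :=
  forall x, U x -> exists d, d > 0 /\ forall y, Rabs (y - x) < d -> U y.

Definition is_topology (T : (R -> Prop) -> Prop) : Prop :=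
  T (fun _ => True) /\ T (fun _ => False) /\
  (forall U V, T U -> T V -> T (fun x => U x /\ V x)) /\
  (forall F : (R -> Prop) -> Prop, (forall U, F U -> T U) ->
     T (fun x => exists U, F U /\ U x)).

Definition eclosure (A : R -> Prop) (x : R) : Prop :=
  forall d, d > 0 -> exists y, A y /\ Rabs (y - x) < d.

Definition nowhere_dense (A : R -> Prop) : Prop :=
  forall U, eopen U -> (forall x, U x -> eclosure A x) -> forall x, ~ U x.

Definition meager (A : R -> Prop) : Prop :=
  exists N : nat -> (R -> Prop), (forall n, nowhere_dense (N n)) /\
    forall x, A x -> exists n, N n x.

Definition baire_property (A : R -> Prop) : Prop :=
  exists U, eopen U /\ meager (fun x => (A x /\ ~ U x) \/ (U x /\ ~ A x)).

Definition residual (A : R -> Prop) : Prop := meager (fun x => ~ A x).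

Definition dense (A : R -> Prop) : Prop :=
  forall x eps, eps > 0 -> exists y, A y /\ Rabs (y - x) < eps.

Definition C_tau (T : (R -> Prop) -> Prop) (f : R -> R) (x : R) : Prop :=
  forall eps, eps > 0 -> exists U, T U /\ U x /\
    forall y, U y -> Rabs (f y - f x) < eps.

(* For eps > 0 let G_eps be the union of the tau-open sets on which f oscillates by less
   than eps. Every tau-continuity point lies in G_eps, so G_eps is tau-open and dense,
   and the complement of C_tau(f) is the union of the complements of G_(1/(n+1)).
   A dense tau-open set G is residual: it differs by a meager set from a Euclidean open
   set O, and O is dense, since otherwise G would meet some nonempty open U disjoint
   from O, and the nonempty tau-open set G /\ U would be meager, being inside G \ O. *)

From Stdlib Require Import Reals Lra Lia.
From Stdlib Require Import ClassicalEpsilon Classical.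
From Stdlib Require Cantor.
Open Scope R_scope.

Lemma meager_subset (A B : R -> Prop) :
  meager B -> (forall x, A x -> B x) -> meager A.
Proof.
  intros [N [HN HB]] HAB. exists N. split; auto.
Qed.

Lemma meager_countable_union (E : nat -> R -> Prop) :
  (forall n, meager (E n)) -> meager (fun x => exists n, E n x).
Proof.
  intros H.
  set (N := fun n => proj1_sig (constructive_indefinite_description _ (H n))).
  assert (HN : forall n, (forall m, nowhere_dense (N n m)) /\
                         forall x, E n x -> exists m, N n m x).
  { intro n. unfold N. destruct (constructive_indefinite_description _ (H n)) as [M HM].
    exact HM. }
  exists (fun k => N (fst (Cantor.of_nat k)) (snd (Cantor.of_nat k))). split.
  - intro k. apply HN.
  - intros x [n Hn]. destruct (proj2 (HN n) x Hn) as [m Hm].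
    exists (Cantor.to_nat (n, m)). rewrite Cantor.cancel_of_to. exact Hm.
Qed.

Lemma meager_union (A B : R -> Prop) :
  meager A -> meager B -> meager (fun x => A x \/ B x).
Proof.
  intros HA HB.
  apply meager_subset with
    (B := fun x => exists n, match n with O => A | S _ => B end x).
  - apply meager_countable_union. intros [|n]; assumption.
  - intros x [Hx | Hx]; [exists O | exists (S O)]; exact Hx.
Qed.

Lemma nowhere_dense_meager (A : R -> Prop) : nowhere_dense A -> meager A.
Proof.
  intros HA. exists (fun _ => A). split; [auto | intros x Hx; exists O; exact Hx].
Qed.

Lemma dense_subset (A B : R -> Prop) :
  dense A -> (forall x, A x -> B x) -> dense B.
Proof.
  intros HA HAB x eps Heps. destruct (HA x eps Heps) as [y [Hy Hyx]]. eauto.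
Qed.

Lemma dense_meets_eopen (A U : R -> Prop) (x : R) :
  dense A -> eopen U -> U x -> exists c, A c /\ U c.
Proof.
  intros HA HU Hx. destruct (HU x Hx) as [d [Hd HdU]].
  destruct (HA x d Hd) as [c [Hc Hcx]]. eauto.
Qed.

Lemma eopen_not_eclosure_compl (O : R -> Prop) (y : R) :
  eopen O -> O y -> ~ eclosure (fun z => ~ O z) y.
Proof.
  intros HO Hy Hcl. destruct (HO y Hy) as [d [Hd HdO]].
  destruct (Hcl d Hd) as [z [Hz Hzy]]. exact (Hz (HdO z Hzy)).
Qed.

Section DenseOpenResidual.

Variable T : (R -> Prop) -> Prop.
Hypothesis hT : is_topology T.
Hypothesis hfiner : forall U, eopen U -> T U.
Hypothesis hopen : forall U, T U -> (exists x, U x) -> baire_property U /\ ~ meager U.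

Lemma dense_open_residual (G : R -> Prop) : T G -> dense G -> residual G.
Proof.
  intros HG Hdense.
  destruct hT as [_ [_ [Hinter _]]].
  assert (Hne : exists x, G x).
  { destruct (Hdense 0 1 Rlt_0_1) as [x [Hx _]]. eauto. }
  destruct (proj1 (hopen G HG Hne)) as [O [HO Hdiff]].
  assert (HOdense : nowhere_dense (fun x => ~ O x)).
  { intros U HU Hcl x Hx.
    destruct (dense_meets_eopen G U x Hdense HU Hx) as [c [Gc Uc]].
    apply (proj2 (hopen (fun y => G y /\ U y) (Hinter G U HG (hfiner U HU))
                        (ex_intro _ c (conj Gc Uc)))).
    apply meager_subset with (1 := Hdiff).
    intros y [Gy Uy]. left. split; [exact Gy |].
    intro Oy. exact (eopen_not_eclosure_compl O y HO Oy (Hcl y Uy)). }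
  apply meager_subset with
    (B := fun x => ~ O x \/ ((G x /\ ~ O x) \/ (O x /\ ~ G x))).
  - apply meager_union; [apply nowhere_dense_meager |]; assumption.
  - intros x Hx. destruct (classic (O x)); tauto.
Qed.

End DenseOpenResidual.

Definition osc_lt (f : R -> R) (eps : R) (W : R -> Prop) : Prop :=
  forall y z, W y -> W z -> Rabs (f y - f z) < eps.

(* Phrased as a union so that its tau-openness is literally an instance of the union axiom. *)
Definition small_osc (T : (R -> Prop) -> Prop) (f : R -> R) (eps : R) (x : R) : Prop :=
  exists W, (T W /\ osc_lt f eps W) /\ W x.

Lemma small_osc_open (T : (R -> Prop) -> Prop) (f : R -> R) (eps : R) :
  is_topology T -> T (small_osc T f eps).
Proof.
  intros [_ [_ [_ Hunion]]]. apply Hunion. intros W [HW _]. exact HW.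
Qed.

Lemma C_tau_small_osc (T : (R -> Prop) -> Prop) (f : R -> R) (eps x : R) :
  eps > 0 -> C_tau T f x -> small_osc T f eps x.
Proof.
  intros Heps Hx. destruct (Hx (eps / 2)) as [W [HW [Wx Hosc]]]; [lra |].
  exists W. split; [split; [exact HW |] | exact Wx].
  intros y z Wy Wz. pose proof (Hosc y Wy). pose proof (Hosc z Wz).
  replace (f y - f z) with ((f y - f x) - (f z - f x)) by ring.
  eapply Rle_lt_trans; [apply Rabs_triang |]. rewrite Rabs_Ropp. lra.
Qed.

Lemma small_osc_C_tau (T : (R -> Prop) -> Prop) (f : R -> R) (x : R) :
  (forall n, small_osc T f (/ INR (S n)) x) -> C_tau T f x.
Proof.
  intros Hx eps Heps.
  destruct (archimed_cor1 eps Heps) as [N [HN HN0]].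
  destruct (Hx (pred N)) as [W [[HW Hosc] Wx]].
  rewrite Nat.succ_pred_pos in Hosc by exact HN0.
  exists W. split; [exact HW | split; [exact Wx |]].
  intros y Wy. specialize (Hosc y x Wy Wx). lra.
Qed.

Theorem mainTheorem14 (T : (R -> Prop) -> Prop)
  (hT : is_topology T)
  (hfiner : forall U, eopen U -> T U)
  (hopen : forall U, T U -> (exists x, U x) -> baire_property U /\ ~ meager U)
  (f : R -> R) :
  dense (C_tau T f) -> residual (C_tau T f).
Proof.
  intros Hdense.
  assert (Hpos : forall n, / INR (S n) > 0).
  { intro n. apply Rinv_0_lt_compat, lt_0_INR. lia. }
  apply meager_subset with
    (B := fun x => exists n, ~ small_osc T f (/ INR (S n)) x).
  - apply meager_countable_union. intro n.
    apply (dense_open_residual T hT hfiner hopen).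
    + apply small_osc_open, hT.
    + apply dense_subset with (1 := Hdense). intro x. apply C_tau_small_osc, Hpos.
  - intros x Hx. apply not_all_ex_not. intro Hall. exact (Hx (small_osc_C_tau T f x Hall)).
Qed.
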